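(* Let $n,N\ge 1$ be integers, let $\Phi:\mathbb{R}^n\times\mathbb{R}\to\mathbb{R}$ and $F:\mathbb{R}^n\times\mathbb{R}\to\mathbb{R}^n$ be twice continuously differentiable, and fix an initial state $x_0\in\mathbb{R}^n$. For a control vector $z=[u_0,u_1,\dots,u_N]^T\in\mathbb{R}^{N+1}$ (scalar controls $u_k\in\mathbb{R}$), define the states recursively by $x_{k+1}=F(x_k,u_k)$, $k=0,1,\dots,N-1$, and the cost $$J(x_0,z)=\sum_{k=0}^{N}\Phi(x_k,u_k),$$ regarded as a function of $z$ (each $x_k$ being a function of $x_0,u_0,\dots,u_{k-1}$). Define the Hamiltonian $H(x,u,\lambda)=\Phi(x,u)+\lambda^TF(x,u)$ for $x,\lambda\in\mathbb{R}^n$, $u\in\mathbb{R}$, and set $$G(x,u,\lambda)=\frac{\partial H(x,u,\lambda)}{\partial x}\in\mathbb{R}^n,\qquad L(x,u,\lambda)=\frac{\partial H(x,u,\lambda)}{\partial u}\in\mathbb{R}.$$ Define costates by the backward recursion $\lambda_{N+1}=\mathbf{0}$ and $\lambda_k=G(x_k,u_k,\lambda_{k+1})$ for $k=N,N-1,\dots,1$. Fix $i\in\{0,1,\dots,N\}$. For $k=0,1,\dots,N$ and $x,\lambda,\alpha,\beta\in\mathbb{R}^n$, $u\in\mathbb{R}$, define $$H_i^{(k)}(x,u,\lambda,\alpha,\beta)=\begin{cases}L(x,u,\lambda)+\alpha^TF(x,u)+\beta^TG(x,u,\lambda), & k=i,\\ \alpha^TF(x,u)+\beta^TG(x,u,\lambda),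 & k\neq i.\end{cases}$$ Define vectors $\beta_k,\alpha_k\in\mathbb{R}^n$ by the forward recursion $\beta_0=\mathbf{0}$, $$\beta_{k+1}=\frac{\partial H_i^{(k)}(x_k,u_k,\lambda_{k+1},\alpha_{k+1},\beta_k)}{\partial \lambda}\quad(k=0,1,\dots,N-1),$$ (the partial derivative with respect to the third argument), and the backward recursion $\alpha_{N+1}=\mathbf{0}$, $$\alpha_k=\frac{\partial H_i^{(k)}(x_k,u_k,\lambda_{k+1},\alpha_{k+1},\beta_k)}{\partial x}\quad(k=N,N-1,\dots,1)$$ (the partial derivative with respect to the first argument). Write $H^i_k=H_i^{(k)}(x_k,u_k,\lambda_{k+1},\alpha_{k+1},\beta_k)$. Then the $i$th row of the Hessian matrix $\nabla^2 J$ of $J(x_0,\cdot)$ with respect to $z$, evaluated at $z$, is $$\nabla^2 J(i)=\left[\frac{\partial H^i_0}{\partial u_0},\frac{\partial H^i_1}{\partial u_1},\dots,\frac{\partial H^i_N}{\partial u_N}\right],$$ where $\frac{\partial H^i_k}{\partial u_k}$ denotes the partial derivative of $H_i^{(k)}$ with respect to its second argument, evaluated at $(x_k,u_k,\lambda_{k+1},\alpha_{k+1},\beta_k)$.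
   Context: Rows and columns of the Hessian are indexed by $0,1,\dots,N$, corresponding to the components $u_0,\dots,u_N$ of $z$. $\mathbf{0}$ denotes the zero vector in $\mathbb{R}^n$. Partial derivatives with respect to vector arguments are column vectors (gradients). The paper treats the case of scalar controls $u_k$, stating that the extension to vector controls is analogous. The quantity $L(x_i,u_i,\lambda_{i+1})$, viewed as a function of $z$ through the state and costate recursions, equals the $i$th component $\partial J/\partial u_i$ of the gradient of $J$. *)

From mathcomp Require Import all_boot all_algebra.
From mathcomp Require Import all_classical all_reals all_analysis.
Set Implicit Arguments. Unset Strict Implicit. Unset Printing Implicit Defensive.
Import numFieldNormedType.Exports.
Local Open Scope ring_scope.

Definition C1 (R : realType) (U V : normedModType R) (f : U -> V) : Prop :=
  (forall p, differentiable f p) /\ (forall v : U, continuous ('D_v f)).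

Definition C2 (R : realType) (U V : normedModType R) (f : U -> V) : Prop :=
  C1 f /\ (forall v : U, C1 ('D_v f)).

Definition ev (R : realType) (m : nat) (j : 'I_m) : 'rV[R]_m := delta_mx 0 j.

Definition dotv (R : realType) (m : nat) (a b : 'rV[R]_m) : R :=
  \sum_(j < m) a 0 j * b 0 j.

Definition grad (R : realType) (m : nat) (f : 'rV[R]_m -> R) (p : 'rV[R]_m)
  : 'rV[R]_m := \row_(j < m) 'D_(ev R j) f p.

Definition hessian (R : realType) (m : nat) (f : 'rV[R]_m -> R) (z : 'rV[R]_m)
  : 'M[R]_m := \matrix_(i < m, j < m) 'D_(ev R j) ('D_(ev R i) f) z.

Section OC.
Variables (R : realType) (n N : nat).
Variable Phi : 'rV[R]_n -> R -> R.
Variable F : 'rV[R]_n -> R -> 'rV[R]_n.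

Definition Ham (x : 'rV[R]_n) (u : R) (l : 'rV[R]_n) : R :=
  Phi x u + dotv l (F x u).

Definition Gf (x : 'rV[R]_n) (u : R) (l : 'rV[R]_n) : 'rV[R]_n :=
  grad (fun y => Ham y u l) x.
Definition Lf (x : 'rV[R]_n) (u : R) (l : 'rV[R]_n) : R :=
  derive1 (fun v => Ham x v l) u.

Definition ctrl (z : 'rV[R]_(N.+1)) (k : nat) : R := z 0 (inord k).

Fixpoint state (x0 : 'rV[R]_n) (z : 'rV[R]_(N.+1)) (k : nat) : 'rV[R]_n :=
  match k with
  | 0 => x0
  | k'.+1 => F (state x0 z k') (ctrl z k')
  end.

Definition Jcost (x0 : 'rV[R]_n) (z : 'rV[R]_(N.+1)) : R :=
  \sum_(k < N.+1) Phi (state x0 z k) (ctrl z k).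

(* costates: lambda_{N+1} = 0, lambda_k = G(x_k,u_k,lambda_{k+1});
   costate_aux s = lambda_{N+1-s} *)
Fixpoint costate_aux (x0 : 'rV[R]_n) (z : 'rV[R]_(N.+1)) (s : nat)
  : 'rV[R]_n :=
  match s with
  | 0 => 0
  | s'.+1 => Gf (state x0 z (N - s')) (ctrl z (N - s')) (costate_aux x0 z s')
  end.
Definition costate (x0 : 'rV[R]_n) (z : 'rV[R]_(N.+1)) (k : nat) : 'rV[R]_n :=
  costate_aux x0 z (N.+1 - k).

Definition Hik (i k : nat) (x : 'rV[R]_n) (u : R) (l a b : 'rV[R]_n) : R :=
  (if k == i then Lf x u l else 0) + dotv a (F x u) + dotv b (Gf x u l).

End OC.

From mathcomp Require Import all_boot all_algebra.
From mathcomp Require Import all_classical all_reals all_analysis.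
From mathcomp Require Import ring.
Import GRing.Theory numFieldNormedType.Exports.
Set Implicit Arguments. Unset Strict Implicit. Unset Printing Implicit Defensive.
Local Open Scope ring_scope.

(* Write P_k = (x_k, u_k), H_k = H(., ., lambda_{k+1}), and let b_k, E_k be the
   derivatives of P_k along the control directions e_i, e_j.  By the chain rule,
   d^2 J / du_j du_i = sum_k (D^2 Phi(P_k)[E_k, b_k] + D Phi(P_k)[(C_k, 0)]), where
   C_k is the second variation of the state.  The costate equation
   lambda_k . w = D H_k(P_k)[(w, 0)] turns the C_k terms into D^2 F terms plus a
   telescoping sum, leaving sum_k D^2 H_k(P_k)[E_k, b_k].  By induction beta_k is
   the variation of x_k along e_i, so b_k = (beta_k, [k = i]) and
   H^i_k = D H_k[b_k] + alpha_{k+1} . F.  Splitting E_k = (dx_k, 0) + [k = j] e_u,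
   the alpha recursion makes the (dx_k, 0) parts telescope as well, and only the
   term k = j, which is dH^i_j / du_j, survives. *)

Section DirectionalDerivative.
Context {R : realType} {V W Y : normedModType R}.

Lemma derive_dirD (g : V -> W) q v1 v2 : differentiable g q ->
  'D_(v1 + v2) g q = 'D_v1 g q + 'D_v2 g q.
Proof. by move=> dg; rewrite !deriveE // linearD. Qed.

Lemma derive_dirZ (g : V -> W) q k v : differentiable g q ->
  'D_(k *: v) g q = k *: 'D_v g q.
Proof. by move=> dg; rewrite !deriveE // linearZ. Qed.

Lemma derive_dir_sum (g : V -> W) q m (v : 'I_m -> V) : differentiable g q ->
  'D_(\sum_(i < m) v i) g q = \sum_(i < m) 'D_(v i) g q.
Proof.
by move=> dg; rewrite deriveE // linear_sum; apply: eq_bigr => i _; rewrite deriveE.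
Qed.

Lemma derive_comp (f : V -> Y) (g : Y -> W) x v :
  differentiable f x -> differentiable g (f x) ->
  'D_v (fun y => g (f y)) x = 'D_('D_v f x) g (f x).
Proof.
move=> df dg; rewrite (deriveE (f := g \o f)); last exact: differentiable_comp.
by rewrite diff_comp // /= -!deriveE.
Qed.

Lemma derive_pair (f : V -> Y) (g : V -> W) x v :
  differentiable f x -> differentiable g x ->
  'D_v (fun y => (f y, g y)) x = ('D_v f x, 'D_v g x).
Proof.
move=> df dg; rewrite deriveE; last exact: differentiable_pair.
by rewrite diff_pair // -!deriveE.
Qed.

Lemma differentiable_addf (f g : V -> W) x :
  differentiable f x -> differentiable g x -> differentiable (fun y => f y + g y) x.
Proof. exact: differentiableD. Qed.

Lemma derive_addf (f g : V -> W) x v :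
  differentiable f x -> differentiable g x ->
  'D_v (fun y => f y + g y) x = 'D_v f x + 'D_v g x.
Proof. by move=> df dg; rewrite (deriveD (f := f)) //; apply: diff_derivable. Qed.

Lemma differentiable_sumf m (h : 'I_m -> V -> W) x :
  (forall i, differentiable (h i) x) ->
  differentiable (fun y => \sum_(i < m) h i y) x.
Proof. by move=> dh; rewrite -fct_sumE; apply: differentiable_sum. Qed.

Lemma derive_sumf m (h : 'I_m -> V -> W) x v :
  (forall i, differentiable (h i) x) ->
  'D_v (fun y => \sum_(i < m) h i y) x = \sum_(i < m) 'D_v (h i) x.
Proof. by move=> dh; rewrite -fct_sumE derive_sum // => i; apply: diff_derivable. Qed.

End DirectionalDerivative.

Section RealValued.
Context {R : realType} {V : normedModType R}.

Lemma differentiable_mulf (f g : V -> R) x :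
  differentiable f x -> differentiable g x -> differentiable (fun y => f y * g y) x.
Proof. exact: differentiableM. Qed.

Lemma derive_mulf (f g : V -> R) x v :
  differentiable f x -> differentiable g x ->
  'D_v (fun y => f y * g y) x = f x * 'D_v g x + g x * 'D_v f x.
Proof. by move=> df dg; rewrite (deriveM (f := f)) //; apply: diff_derivable. Qed.

Lemma differentiable_cmulf (f : V -> R) k x :
  differentiable f x -> differentiable (fun y => k * f y) x.
Proof. by move=> df; apply: differentiable_mulf => //; exact: differentiable_cst. Qed.

Lemma derive_cmulf (f : V -> R) k x v : differentiable f x ->
  'D_v (fun y => k * f y) x = k * 'D_v f x.
Proof.
move=> df; have dk : differentiable (fun=> k) x by exact: differentiable_cst.
by rewrite derive_mulf // derive_cst mulr0 addr0.
Qed.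

End RealValued.

Definition twice_differentiable {R : realType} {V W : normedModType R} (g : V -> W) :=
  (forall q, differentiable g q) /\ (forall v q, differentiable ('D_v g) q).

Lemma C2_twice_differentiable (R : realType) (V W : normedModType R) (f : V -> W) :
  C2 f -> twice_differentiable f.
Proof. by case=> [[f1 _] f2]; split=> // v; case: (f2 v). Qed.

Section SecondDerivative.
Context {R : realType} {V W : normedModType R}.
Variable g : V -> W.
Hypothesis g2 : twice_differentiable g.

Lemma derive2_dirD w v1 v2 q :
  'D_w ('D_(v1 + v2) g) q = 'D_w ('D_v1 g) q + 'D_w ('D_v2 g) q.
Proof.
have [g1 dDg] := g2.
have -> : 'D_(v1 + v2) g = fun q => 'D_v1 g q + 'D_v2 g q.
  by apply: funext => q'; rewrite derive_dirD.
exact: derive_addf.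
Qed.

Lemma derive2_dirZ w k v q : 'D_w ('D_(k *: v) g) q = k *: 'D_w ('D_v g) q.
Proof.
have [g1 dDg] := g2.
have -> : 'D_(k *: v) g = k \*: 'D_v g by apply: funext => q'; rewrite derive_dirZ.
by rewrite deriveZ //; apply: diff_derivable.
Qed.

Lemma derive2_dir_sum w m (v : 'I_m -> V) q :
  'D_w ('D_(\sum_(i < m) v i) g) q = \sum_(i < m) 'D_w ('D_(v i) g) q.
Proof.
have [g1 dDg] := g2.
have -> : 'D_(\sum_(i < m) v i) g = fun q => \sum_(i < m) 'D_(v i) g q.
  by apply: funext => q'; rewrite derive_dir_sum.
exact: derive_sumf.
Qed.

End SecondDerivative.

Section MatrixValued.
Context {R : realType} {V : normedModType R}.

Lemma derive_entry m k (M : V -> 'M[R]_(m, k)) t v i j :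
  differentiable M t -> 'D_v (fun t => M t i j) t = 'D_v M t i j.
Proof. by move=> dM; rewrite derive_mx ?mxE //; exact: diff_derivable. Qed.

Lemma differentiable_row m (a : V -> 'rV[R]_m) z :
  (forall j, differentiable (fun y => a y 0 j) z) -> differentiable a z.
Proof.
move=> da; have -> : a = fun y => \sum_(j < m) a y 0 j *: 'e_j.
  by apply: funext => y; rewrite -row_sum_delta.
by apply: differentiable_sumf => j; exact: differentiableZl.
Qed.

End MatrixValued.

Lemma derive_coord (R : realType) m k (M v : 'M[R]_(m, k)) i j :
  'D_v (fun N : 'M[R]_(m, k) => N i j) M = v i j.
Proof. by rewrite (derive_entry (M := id)) // derive_id. Qed.

Section ProductSpace.
Context {R : realType} {n : nat}.
Local Notation U := ('rV[R]_n * R)%type.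

Definition e_x (c : 'I_n) : U := ('e_c, 0).
Definition e_u : U := (0, 1).

Lemma pair_basisE (a : 'rV[R]_n) (t : R) :
  ((a, t) : U) = \sum_(c < n) a 0 c *: e_x c + t *: e_u.
Proof.
have sum_pair (f : 'I_n -> 'rV[R]_n) :
    \sum_(c < n) ((f c, 0) : U) = (\sum_(c < n) f c, 0).
  by elim/big_rec2: _ => // c b _ _ ->; rewrite -[0 in RHS]addr0.
rewrite (eq_bigr (fun c => (a 0 c *: 'e_c, 0))) => [|c _]; last first.
  by apply: injective_projections => //=; rewrite scaler0.
rewrite sum_pair -row_sum_delta.
apply: injective_projections => /=; first by rewrite scaler0 addr0.
by rewrite add0r; exact: (esym (mulr1 t)).
Qed.

Lemma pair_splitE (a : 'rV[R]_n) (t : R) : ((a, t) : U) = (a, 0) + t *: e_u.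
Proof.
apply: injective_projections => /=; first by rewrite scaler0 addr0.
by rewrite add0r; exact: (esym (mulr1 t)).
Qed.

Lemma derive_pairE (g : U -> R) q a t : differentiable g q ->
  'D_((a, t) : U) g q = \sum_(c < n) a 0 c * 'D_(e_x c) g q + t * 'D_e_u g q.
Proof.
move=> dg; rewrite pair_basisE derive_dirD // derive_dir_sum // derive_dirZ //.
by under eq_bigr do rewrite derive_dirZ //.
Qed.

Section DirectionComp.
Context {Z : normedModType R}.
Variables (g : U -> R) (p : Z -> U) (a : Z -> 'rV[R]_n) (t : Z -> R) (z : Z).
Hypotheses (g2 : twice_differentiable g) (dp : differentiable p z).
Hypotheses (da : differentiable a z) (dt : differentiable t z).

Let dir_basisE : (fun y => 'D_((a y, t y) : U) g (p y)) =
  fun y => \sum_(c < n) a y 0 c * 'D_(e_x c) g (p y) + t y * 'D_e_u g (p y).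
Proof. by apply: funext => y; rewrite derive_pairE //; case: g2. Qed.

Let dDg v : differentiable (fun y => 'D_v g (p y)) z.
Proof. by case: g2 => _ dDg; exact: (differentiable_comp dp (dDg v _)). Qed.

Let da_coord c : differentiable (fun y => a y 0 c) z.
Proof. exact: (differentiable_comp da (differentiable_coord _ _ _)). Qed.

Lemma differentiable_dir_comp :
  differentiable (fun y => 'D_((a y, t y) : U) g (p y)) z.
Proof.
rewrite dir_basisE; apply: differentiable_addf; last exact: differentiable_mulf.
by apply: differentiable_sumf => c; exact: differentiable_mulf.
Qed.

Lemma derive_dir_comp w :
  'D_w (fun y => 'D_((a y, t y) : U) g (p y)) z =
  'D_('D_w p z) ('D_((a z, t z) : U) g) (p z) +
  'D_(('D_w a z, 'D_w t z) : U) g (p z).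
Proof.
have [g1 dDg2] := g2.
have D_comp v : 'D_w (fun y => 'D_v g (p y)) z = 'D_('D_w p z) ('D_v g) (p z).
  exact: derive_comp dp (dDg2 _ _).
have D2E : 'D_('D_w p z) ('D_((a z, t z) : U) g) (p z) =
    \sum_(c < n) a z 0 c * 'D_('D_w p z) ('D_(e_x c) g) (p z) +
    t z * 'D_('D_w p z) ('D_e_u g) (p z).
  rewrite (pair_basisE (a z)) [in LHS](derive2_dirD g2) [in LHS](derive2_dir_sum g2).
  rewrite [in LHS](derive2_dirZ g2).
  by under eq_bigr do rewrite (derive2_dirZ g2).
have DE : 'D_(('D_w a z, 'D_w t z) : U) g (p z) =
    \sum_(c < n) 'D_w (fun y => a y 0 c) z * 'D_(e_x c) g (p z) +
    'D_w t z * 'D_e_u g (p z).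
  rewrite [in LHS](derive_pairE _ _ (g1 _)).
  by under eq_bigr do rewrite -(derive_entry w _ _ da).
rewrite D2E DE dir_basisE derive_addf; first last.
- exact: differentiable_mulf.
- by apply: differentiable_sumf => c; exact: differentiable_mulf.
rewrite derive_sumf; last by move=> c; exact: differentiable_mulf.
rewrite derive_mulf // D_comp.
under eq_bigr do rewrite derive_mulf // D_comp.
rewrite big_split /= ['D_e_u g (p z) * _]mulrC.
under [X in _ + X + _ = _]eq_bigr do rewrite mulrC.
exact: addrACA.
Qed.

End DirectionComp.
End ProductSpace.

Section Slices.
Context {R : realType} {n : nat} {W : normedModType R}.
Local Notation U := ('rV[R]_n * R)%type.

Lemma derive_slice_x (g : U -> W) x u a : differentiable g (x, u) ->
  'D_a (fun y => g (y, u)) x = 'D_((a, 0) : U) g (x, u).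
Proof.
move=> dg; have dcst : differentiable (fun=> u) x by exact: differentiable_cst.
have dp : differentiable (fun y => (y, u)) x by exact: differentiable_pair.
by rewrite (derive_comp _ dp dg) (derive_pair (f := id)) // derive_id derive_cst.
Qed.

Lemma derive_slice_u (g : U -> W) x u s : differentiable g (x, u) ->
  'D_s (fun v => g (x, v)) u = 'D_((0, s) : U) g (x, u).
Proof.
move=> dg; have dcst : differentiable (fun=> x) u by exact: differentiable_cst.
have dp : differentiable (fun v => (x, v)) u by exact: differentiable_pair.
by rewrite (derive_comp _ dp dg) (derive_pair (g := id)) // derive_id derive_cst.
Qed.

End Slices.

Lemma derive1_slice_u (R : realType) n (g : 'rV[R]_n * R -> R) x u :
  differentiable g (x, u) -> derive1 (fun v => g (x, v)) u = 'D_e_u g (x, u).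
Proof. by move=> dg; rewrite derive1E derive_slice_u. Qed.

Section DotGradient.
Context {R : realType} {n : nat}.
Local Notation U := ('rV[R]_n * R)%type.

Lemma dotvC (a b : 'rV[R]_n) : dotv a b = dotv b a.
Proof. by apply: eq_bigr => c _; rewrite mulrC. Qed.

Lemma dotv0l (b : 'rV[R]_n) : dotv 0 b = 0.
Proof. by rewrite /dotv big1 // => c _; rewrite mxE mul0r. Qed.

Lemma dotv0r (b : 'rV[R]_n) : dotv b 0 = 0.
Proof. by rewrite dotvC dotv0l. Qed.

Lemma dotv_grad_slice (g : U -> R) x u w : differentiable g (x, u) ->
  dotv (grad (fun y => g (y, u)) x) w = 'D_((w, 0) : U) g (x, u).
Proof.
move=> dg; rewrite derive_pairE // mul0r addr0.
by apply: eq_bigr => c _; rewrite mxE derive_slice_x // mulrC.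
Qed.

Lemma grad_affine (c : R) (k l : 'rV[R]_n) : grad (fun l => c + dotv l k) l = k.
Proof.
apply/rowP => j; rewrite mxE.
have dcoord i : differentiable (fun l : 'rV[R]_n => l 0 i) l.
  exact: differentiable_coord.
have dc : differentiable (fun=> c) l by exact: differentiable_cst.
have -> : (fun l => c + dotv l k) = fun l => c + \sum_(i < n) k 0 i * l 0 i.
  by apply: funext => l'; rewrite dotvC.
have dterm i : differentiable (fun l : 'rV[R]_n => k 0 i * l 0 i) l.
  exact: differentiable_cmulf.
rewrite (derive_addf _ dc (differentiable_sumf dterm)) derive_cst add0r.
rewrite (derive_sumf _ dterm).
under eq_bigr do rewrite derive_cmulf // derive_coord.
rewrite (bigD1 j) //= big1 => [|i ij]; rewrite /ev !mxE ?eqxx /=.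
  by rewrite mulr1 addr0.
by rewrite (negbTE ij) mulr0.
Qed.

End DotGradient.

Section LinearCombination.
Context {R : realType} {V : normedModType R} {m : nat}.
Variables (g : V -> R) (h : 'I_m -> V -> R) (c : 'I_m -> R).
Local Notation f := (fun q => g q + \sum_(j < m) c j * h j q).

Lemma differentiable_lincomb q : differentiable g q ->
  (forall j, differentiable (h j) q) -> differentiable f q.
Proof.
move=> dg dh; apply: differentiable_addf => //.
by apply: differentiable_sumf => j; exact: differentiable_cmulf.
Qed.

Lemma derive_lincomb q v : differentiable g q ->
  (forall j, differentiable (h j) q) ->
  'D_v f q = 'D_v g q + \sum_(j < m) c j * 'D_v (h j) q.
Proof.
move=> dg dh; have dch j : differentiable (fun q => c j * h j q) q.
  exact: differentiable_cmulf.
rewrite (derive_addf _ dg (differentiable_sumf dch)) (derive_sumf _ dch).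
by under eq_bigr do rewrite derive_cmulf //.
Qed.

End LinearCombination.

Section TwiceLinearCombination.
Context {R : realType} {V : normedModType R} {m : nat}.
Variables (g : V -> R) (h : 'I_m -> V -> R) (c : 'I_m -> R).
Hypotheses (g2 : twice_differentiable g) (h2 : forall j, twice_differentiable (h j)).
Local Notation f := (fun q => g q + \sum_(j < m) c j * h j q).

Let derive_lincomb_fun v :
  'D_v f = fun q => 'D_v g q + \sum_(j < m) c j * 'D_v (h j) q.
Proof.
apply: funext => q; apply: derive_lincomb; first by case: g2.
by move=> j; case: (h2 j).
Qed.

Lemma twice_differentiable_lincomb : twice_differentiable f.
Proof.
split=> [q|v q]; last rewrite derive_lincomb_fun.
all: apply: differentiable_lincomb; first by case: g2.
all: by move=> j; case: (h2 j).
Qed.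

Lemma derive2_lincomb v w q :
  'D_w ('D_v f) q = 'D_w ('D_v g) q + \sum_(j < m) c j * 'D_w ('D_v (h j)) q.
Proof.
rewrite derive_lincomb_fun derive_lincomb //; first by case: g2.
by move=> j; case: (h2 j).
Qed.

End TwiceLinearCombination.

Lemma telescope_sumr_ord (V : zmodType) m (f : nat -> V) :
  \sum_(k < m) (f k - f k.+1) = f 0%N - f m.
Proof.
elim: m => [|m IHm]; first by rewrite big_ord0 subrr.
by rewrite big_ord_recr /= IHm addrA subrK.
Qed.

Section OptimalControl.
Variables (R : realType) (n N : nat).
Variables (Phi : 'rV[R]_n -> R -> R) (F : 'rV[R]_n -> R -> 'rV[R]_n).
Hypothesis hPhi : C2 (fun p : 'rV[R]_n * R => Phi p.1 p.2).
Hypothesis hF : C2 (fun p : 'rV[R]_n * R => F p.1 p.2).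
Variable x0 : 'rV[R]_n.
Local Notation U := ('rV[R]_n * R)%type.
Local Notation Z := 'rV[R]_N.+1.

Definition Phi_U (q : U) : R := Phi q.1 q.2.
Definition F_U (m : 'I_n) (q : U) : R := F q.1 q.2 0 m.
Definition ham (l : 'rV[R]_n) (q : U) : R :=
  Phi_U q + \sum_(m < n) l 0 m * F_U m q.

Lemma twice_differentiable_Phi_U : twice_differentiable Phi_U.
Proof. exact: C2_twice_differentiable. Qed.

Lemma twice_differentiable_F_U m : twice_differentiable (F_U m).
Proof.
have [F1 F2] := C2_twice_differentiable hF.
have dcoord (M : 'rV[R]_n) := differentiable_coord M 0 m.
split=> [q|v q]; first exact: differentiable_comp (F1 q) (dcoord _).
have -> : 'D_v (F_U m) = fun q => 'D_v (fun p : U => F p.1 p.2) q 0 m.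
  by apply: funext => q'; rewrite (derive_entry v _ _ (F1 q')).
exact: differentiable_comp (F2 v q) (dcoord _).
Qed.

Lemma twice_differentiable_ham l : twice_differentiable (ham l).
Proof.
apply: twice_differentiable_lincomb; first exact: twice_differentiable_Phi_U.
exact: twice_differentiable_F_U.
Qed.

Lemma derive_ham l v q :
  'D_v (ham l) q = 'D_v Phi_U q + \sum_(m < n) l 0 m * 'D_v (F_U m) q.
Proof.
apply: derive_lincomb; first by case: twice_differentiable_Phi_U.
by move=> m; case: (twice_differentiable_F_U m).
Qed.

Lemma derive2_ham l v w q : 'D_w ('D_v (ham l)) q =
  'D_w ('D_v Phi_U) q + \sum_(m < n) l 0 m * 'D_w ('D_v (F_U m)) q.
Proof.
apply: derive2_lincomb; first exact: twice_differentiable_Phi_U.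
exact: twice_differentiable_F_U.
Qed.

Definition stateU k (z : Z) : U := (state F x0 z k, ctrl z k).
Definition dstate (d : Z) k (z : Z) : 'rV[R]_n := 'D_d (fun y => state F x0 y k) z.
Definition d2state (d e : Z) k (z : Z) : 'rV[R]_n := 'D_e (dstate d k) z.

Lemma differentiable_ctrl k z : differentiable (fun y : Z => ctrl y k) z.
Proof. exact: differentiable_coord. Qed.

Lemma derive_ctrl k z w : 'D_w (fun y : Z => ctrl y k) z = ctrl w k.
Proof. exact: derive_coord. Qed.

Lemma differentiable_state k (z : Z) : differentiable (fun y => state F x0 y k) z.
Proof.
elim: k z => [|k IHk] z; first exact: differentiable_cst.
have [[F1 _] _] := hF.
exact: differentiable_comp (differentiable_pair (IHk z) (differentiable_ctrl k z)) (F1 _).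
Qed.

Lemma differentiable_stateU k (z : Z) : differentiable (stateU k) z.
Proof. exact: differentiable_pair (differentiable_state k z) (differentiable_ctrl k z). Qed.

Lemma derive_stateU k (z w : Z) : 'D_w (stateU k) z = (dstate w k z, ctrl w k).
Proof.
by rewrite (derive_pair _ (differentiable_state k z) (differentiable_ctrl k z)) derive_ctrl.
Qed.

Lemma dstate0 (d z : Z) : dstate d 0 z = 0.
Proof. exact: derive_cst. Qed.

Lemma dstateS (d : Z) k z m :
  dstate d k.+1 z 0 m = 'D_((dstate d k z, ctrl d k) : U) (F_U m) (stateU k z).
Proof.
rewrite /dstate -(derive_entry d _ _ (differentiable_state k.+1 z)).
have [F1 _] := twice_differentiable_F_U m.
by rewrite (derive_comp (f := stateU k) _ (differentiable_stateU k z) (F1 _)) derive_stateU.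
Qed.

Lemma differentiable_dstate (d : Z) k z : differentiable (dstate d k) z.
Proof.
elim: k z => [|k IHk] z.
  by rewrite (_ : dstate d 0 = fun=> 0); [exact: differentiable_cst | exact/funext/dstate0].
apply: differentiable_row => m.
rewrite (_ : (fun y => _) = fun y => 'D_((dstate d k y, ctrl d k) : U) (F_U m) (stateU k y)).
  have dc : differentiable (fun=> ctrl d k) z by exact: differentiable_cst.
  exact: differentiable_dir_comp (twice_differentiable_F_U m) (differentiable_stateU k z)
    (IHk z) dc.
by apply: funext => y; rewrite dstateS.
Qed.

Lemma d2state0 (d e z : Z) : d2state d e 0 z = 0.
Proof. by rewrite /d2state (_ : dstate d 0 = fun=> 0) ?derive_cst //; exact/funext/dstate0. Qed.

Lemma d2stateS (d e : Z) k z m :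
  d2state d e k.+1 z 0 m =
  'D_('D_e (stateU k) z) ('D_((dstate d k z, ctrl d k) : U) (F_U m)) (stateU k z) +
  'D_((d2state d e k z, 0) : U) (F_U m) (stateU k z).
Proof.
rewrite /d2state -(derive_entry e _ _ (differentiable_dstate d k.+1 z)).
rewrite (_ : (fun y => _) = fun y => 'D_((dstate d k y, ctrl d k) : U) (F_U m) (stateU k y)).
  have dc : differentiable (fun=> ctrl d k) z by exact: differentiable_cst.
  rewrite (derive_dir_comp (twice_differentiable_F_U m) (differentiable_stateU k z)
    (differentiable_dstate d k z) dc).
  by rewrite derive_cst.
by apply: funext => y; rewrite dstateS.
Qed.

Lemma derive_Jcost (d z : Z) : 'D_d (Jcost Phi F x0) z =
  \sum_(k < N.+1) 'D_((dstate d k z, ctrl d k) : U) Phi_U (stateU k z).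
Proof.
have [P1 _] := twice_differentiable_Phi_U.
have dP k : differentiable (fun y => Phi_U (stateU k y)) z.
  exact: differentiable_comp (differentiable_stateU k z) (P1 _).
rewrite (derive_sumf _ dP); apply: eq_bigr => k _.
by rewrite (derive_comp _ (differentiable_stateU k z) (P1 _)) derive_stateU.
Qed.

Lemma derive2_Jcost (d e z : Z) : 'D_e ('D_d (Jcost Phi F x0)) z =
  \sum_(k < N.+1)
    ('D_('D_e (stateU k) z) ('D_((dstate d k z, ctrl d k) : U) Phi_U) (stateU k z) +
     'D_((d2state d e k z, 0) : U) Phi_U (stateU k z)).
Proof.
have P2 := twice_differentiable_Phi_U.
have dc k : differentiable (fun=> ctrl d k) z by exact: differentiable_cst.
have dterm (k : 'I_N.+1) := differentiable_dir_comp P2 (differentiable_stateU k z)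
    (differentiable_dstate d k z) (dc k).
rewrite (_ : 'D_d _ = fun y =>
    \sum_(k < N.+1) 'D_((dstate d k y, ctrl d k) : U) Phi_U (stateU k y)).
  rewrite (derive_sumf _ dterm); apply: eq_bigr => k _.
  by rewrite (derive_dir_comp P2 (differentiable_stateU k z) (differentiable_dstate d k z) (dc k)) derive_cst.
by apply: funext => y; rewrite derive_Jcost.
Qed.

Lemma costateS (z : Z) k : (k <= N)%N ->
  costate Phi F x0 z k =
  Gf Phi F (state F x0 z k) (ctrl z k) (costate Phi F x0 z k.+1).
Proof. by move=> kN; rewrite /costate subSS subSn //= subKn. Qed.

Lemma costate_last (z : Z) : costate Phi F x0 z N.+1 = 0.
Proof. by rewrite /costate subnn. Qed.

Lemma dotv_costate (z : Z) k w : (k <= N)%N ->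
  dotv (costate Phi F x0 z k) w =
  'D_((w, 0) : U) (ham (costate Phi F x0 z k.+1)) (stateU k z).
Proof.
move=> kN; rewrite costateS // (dotv_grad_slice (g := ham _)) //.
by case: (twice_differentiable_ham (costate Phi F x0 z k.+1)).
Qed.

(* The costate equation trades the second variation of the state for second
   derivatives of [F], up to a telescoping term. *)
Lemma costate_adjoint_step (d e z : Z) k : (k <= N)%N ->
  let lam := costate Phi F x0 z in
  let b := (dstate d k z, ctrl d k) : U in
  'D_('D_e (stateU k) z) ('D_b Phi_U) (stateU k z) +
  'D_((d2state d e k z, 0) : U) Phi_U (stateU k z) =
  'D_('D_e (stateU k) z) ('D_b (ham (lam k.+1))) (stateU k z) +
  (dotv (lam k) (d2state d e k z) - dotv (lam k.+1) (d2state d e k.+1 z)).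
Proof.
move=> kN lam b.
have -> : dotv (lam k.+1) (d2state d e k.+1 z) =
    \sum_(m < n) lam k.+1 0 m *
      'D_('D_e (stateU k) z) ('D_b (F_U m)) (stateU k z) +
    \sum_(m < n) lam k.+1 0 m * 'D_((d2state d e k z, 0) : U) (F_U m) (stateU k z).
  by rewrite -big_split; apply: eq_bigr => m _; rewrite d2stateS mulrDr.
rewrite dotv_costate // derive_ham derive2_ham.
ring.
Qed.

Lemma derive2_Jcost_adjoint (d e z : Z) :
  'D_e ('D_d (Jcost Phi F x0)) z =
  \sum_(k < N.+1) 'D_('D_e (stateU k) z)
      ('D_((dstate d k z, ctrl d k) : U) (ham (costate Phi F x0 z k.+1))) (stateU k z).
Proof.
rewrite derive2_Jcost.
under eq_bigr => k _ do rewrite (costate_adjoint_step d e z (ltn_ord k)).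
rewrite big_split /=.
rewrite (telescope_sumr_ord _ (fun k => dotv (costate Phi F x0 z k) (d2state d e k z))).
by rewrite /= d2state0 costate_last dotv0l dotv0r subr0 addr0.
Qed.

(* The terms [L + beta^T G] of [Hik] merge into one directional derivative of the
   Hamiltonian, in the direction [(beta, [k = i])]. *)
Definition HikU (i k : nat) (l a b : 'rV[R]_n) (q : U) : R :=
  'D_((b, (k == i)%:R) : U) (ham l) q + \sum_(m < n) a 0 m * F_U m q.

Lemma HikE i k x u l a b : Hik Phi F i k x u l a b = HikU i k l a b (x, u).
Proof.
have [H1 H2] := twice_differentiable_ham l.
rewrite /Hik /HikU /Lf (derive1_slice_u (g := ham l)) // (pair_splitE b).
rewrite derive_dirD // derive_dirZ // [dotv b _]dotvC (dotv_grad_slice (g := ham l)) //.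
by case: (k == i); rewrite ?scale1r ?scale0r /dotv /F_U /=; ring.
Qed.

Lemma derive_HikU i k l a b w q : 'D_w (HikU i k l a b) q =
  'D_w ('D_((b, (k == i)%:R) : U) (ham l)) q + \sum_(m < n) a 0 m * 'D_w (F_U m) q.
Proof.
apply: derive_lincomb; first by case: (twice_differentiable_ham l) => _; apply.
by move=> m; case: (twice_differentiable_F_U m).
Qed.

Lemma differentiable_HikU i k l a b q : differentiable (HikU i k l a b) q.
Proof.
apply: differentiable_lincomb; first by case: (twice_differentiable_ham l) => _; apply.
by move=> m; case: (twice_differentiable_F_U m).
Qed.

Lemma dotv_grad_Hik i k x u l a b w :
  dotv (grad (fun y => Hik Phi F i k y u l a b) x) w =
  'D_((w, 0) : U) (HikU i k l a b) (x, u).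
Proof.
rewrite (_ : (fun y => _) = fun y => HikU i k l a b (y, u)).
  exact: dotv_grad_slice (differentiable_HikU _ _ _ _ _ _).
by apply: funext => y; rewrite HikE.
Qed.

Lemma ctrl_ev (j : 'I_N.+1) k : (k < N.+1)%N -> ctrl (ev R j) k = (k == j)%:R.
Proof. by move=> kN; rewrite /ctrl /ev mxE eqxx -val_eqE /= inordK. Qed.

Lemma sum_ctrl_ev_mul (j : 'I_N.+1) (f : 'I_N.+1 -> R) :
  \sum_(k < N.+1) ctrl (ev R j) k * f k = f j.
Proof.
rewrite (bigD1 j) //= big1 => [|k kj]; rewrite ctrl_ev ?eqxx ?mul1r ?addr0 //.
by rewrite val_eqE (negbTE kj) mul0r.
Qed.

Section HessianRow.
Variables (z : Z) (i : 'I_N.+1) (alpha beta : nat -> 'rV[R]_n).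
Local Notation x := (state F x0 z).
Local Notation u := (ctrl z).
Local Notation lam := (costate Phi F x0 z).
Hypothesis beta0 : beta 0%N = 0.
Hypothesis betaS : forall k, (k < N)%N ->
  beta k.+1 = grad (fun l => Hik Phi F i k (x k) (u k) l (alpha k.+1) (beta k)) (lam k.+1).
Hypothesis alpha_last : alpha N.+1 = 0.
Hypothesis alphaE : forall k, (1 <= k <= N)%N ->
  alpha k = grad (fun y => Hik Phi F i k y (u k) (lam k.+1) (alpha k.+1) (beta k)) (x k).

Lemma beta_dstate k : (k <= N)%N -> beta k = dstate (ev R i) k z.
Proof.
elim: k => [|k IHk] kN; first by rewrite beta0 dstate0.
have b_ctrl : (k == i)%:R = ctrl (ev R i) k by rewrite ctrl_ev // ltnW.
rewrite betaS // (_ : (fun l => _) = fun l =>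
   ('D_((beta k, (k == i)%:R) : U) Phi_U (stateU k z) +
    \sum_(m < n) alpha k.+1 0 m * F_U m (stateU k z)) +
   dotv l (\row_m 'D_((beta k, (k == i)%:R) : U) (F_U m) (stateU k z))).
  rewrite grad_affine; apply/rowP => m.
  by rewrite mxE dstateS IHk ?b_ctrl // ltnW.
apply: funext => l; rewrite HikE /HikU derive_ham /dotv.
under [X in _ = _ + X]eq_bigr do rewrite mxE.
by rewrite addrAC.
Qed.

Lemma beta_pair k : (k <= N)%N ->
  ((beta k, (k == i)%:R) : U) = (dstate (ev R i) k z, ctrl (ev R i) k).
Proof. by move=> kN; rewrite beta_dstate // ctrl_ev. Qed.

Lemma derive1_Hik k : (k <= N)%N ->
  derive1 (fun v => Hik Phi F i k (x k) v (lam k.+1) (alpha k.+1) (beta k)) (u k) =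
  'D_e_u ('D_((dstate (ev R i) k z, ctrl (ev R i) k) : U) (ham (lam k.+1))) (stateU k z) +
  \sum_(m < n) alpha k.+1 0 m * 'D_e_u (F_U m) (stateU k z).
Proof.
move=> kN; under eq_fun do rewrite HikE.
by rewrite (derive1_slice_u (g := HikU _ _ _ _ _)) ?derive_HikU ?beta_pair //;
  exact: differentiable_HikU.
Qed.

(* The alpha recursion does for the first variation along [e_j] what the costate
   does for the second variation in [costate_adjoint_step]. *)
Lemma alpha_adjoint_step (j : 'I_N.+1) k : (k <= N)%N ->
  let D k := dstate (ev R j) k z in
  'D_((D k, 0) : U) ('D_((dstate (ev R i) k z, ctrl (ev R i) k) : U) (ham (lam k.+1)))
    (stateU k z) =
  dotv (alpha k) (D k) - dotv (alpha k.+1) (D k.+1) +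
  ctrl (ev R j) k * \sum_(m < n) alpha k.+1 0 m * 'D_e_u (F_U m) (stateU k z).
Proof.
move=> kN D.
have dF m := (twice_differentiable_F_U m).1.
have -> : dotv (alpha k.+1) (D k.+1) =
    \sum_(m < n) alpha k.+1 0 m * 'D_((D k, 0) : U) (F_U m) (stateU k z) +
    ctrl (ev R j) k * \sum_(m < n) alpha k.+1 0 m * 'D_e_u (F_U m) (stateU k z).
  rewrite /dotv big_distrr -big_split; apply: eq_bigr => m _ /=.
  rewrite /D dstateS (pair_splitE (dstate _ k z)) derive_dirD // derive_dirZ //.
  by rewrite mulrDr mulrCA.
have [->|k_gt0] := posnP k.
  rewrite /D (dstate0 (ev R j)) dotv0r -[((0, 0) : U)]/(0 : U) derive0.
  rewrite big1 => [|m _]; last by rewrite derive0 mulr0.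
  by rewrite !add0r addNr.
rewrite alphaE ?k_gt0 // dotv_grad_Hik derive_HikU beta_pair // -/(stateU k z).
by rewrite opprD addrA addrK subrK.
Qed.

Lemma hessian_entry (j : 'I_N.+1) :
  'D_(ev R j) ('D_(ev R i) (Jcost Phi F x0)) z =
  derive1 (fun v => Hik Phi F i j (x j) v (lam j.+1) (alpha j.+1) (beta j)) (u j).
Proof.
rewrite derive2_Jcost_adjoint (derive1_Hik (ltn_ord j)).
pose D k := dstate (ev R j) k z.
under eq_bigr => k _.
  have [_ dH] := twice_differentiable_ham (lam k.+1).
  rewrite derive_stateU (pair_splitE (dstate (ev R j) k z)).
  rewrite derive_dirD; last exact: dH.
  rewrite derive_dirZ; last exact: dH.
  rewrite (alpha_adjoint_step j (ltn_ord k)) -addrA -mulrDr.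
over.
rewrite big_split /= (telescope_sumr_ord _ (fun k => dotv (alpha k) (D k))).
rewrite sum_ctrl_ev_mul /D dstate0 dotv0r alpha_last dotv0l.
by rewrite subrr add0r addrC.
Qed.

End HessianRow.

End OptimalControl.

Theorem theorem1 (R : realType) (n N : nat) (hn : (0 < n)%N) (hN : (0 < N)%N)
  (Phi : 'rV[R]_n -> R -> R) (F : 'rV[R]_n -> R -> 'rV[R]_n)
  (hPhi : C2 (fun p : 'rV[R]_n * R => Phi p.1 p.2))
  (hF : C2 (fun p : 'rV[R]_n * R => F p.1 p.2))
  (x0 : 'rV[R]_n) (z : 'rV[R]_(N.+1)) (i : 'I_(N.+1))
  (alpha beta : nat -> 'rV[R]_n) :
  let x := state F x0 z in
  let u := ctrl z in
  let lam := costate Phi F x0 z in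
  beta 0%N = 0 ->
  (forall k : nat, (k < N)%N ->
     beta k.+1 =
       grad (fun l => Hik Phi F i k (x k) (u k) l (alpha k.+1) (beta k))
            (lam k.+1)) ->
  alpha N.+1 = 0 ->
  (forall k : nat, (1 <= k <= N)%N ->
     alpha k =
       grad (fun y => Hik Phi F i k y (u k) (lam k.+1) (alpha k.+1) (beta k))
            (x k)) ->
  row i (hessian (Jcost Phi F x0) z) =
    \row_(k < N.+1)
      derive1 (fun v => Hik Phi F i k (x k) v (lam k.+1) (alpha k.+1) (beta k))
              (u k).
Proof.
move=> x u lam beta0 betaS alpha_last alphaE; apply/rowP => j; rewrite !mxE.
exact: (hessian_entry hPhi hF beta0 betaS alpha_last alphaE j).
Qed.
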